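(* Let $\mathcal{M},\mathcal{N}\in\mathbb{N}$ and let $\boldsymbol{L}\in\mathbb{R}^{\mathcal{M}\times\mathcal{N}}$ be such that, for each $i=1,\dots,\mathcal{M}$, the entries $L_{i1},\dots,L_{i\mathcal{N}}$ together with $1$ are linearly independent over $\mathbb{Q}$. Let $\varepsilon,T>0$ and $\boldsymbol{Q}\in[1,+\infty)^{\mathcal{N}}$. Then for each $i=1,\dots,\mathcal{M}$, $$\#\big(\Lambda_{\boldsymbol{L}}\cap Z^i\big)\ll_{\mathcal{M}}(1+T)^{\mathcal{M}},$$ with implied constant depending only on $\mathcal{M}$.
   Context: $\Lambda_{\boldsymbol{L}}:=\{(L_1\boldsymbol{q}+p_1,\dots,L_{\mathcal{M}}\boldsymbol{q}+p_{\mathcal{M}},\boldsymbol{q}):\boldsymbol{p}\in\mathbb{Z}^{\mathcal{M}},\boldsymbol{q}\in\mathbb{Z}^{\mathcal{N}}\}\subset\mathbb{R}^{\mathcal{M}+\mathcal{N}}$, where $L_i\boldsymbol{q}=\sum_jL_{ij}q_j$. Let $H:=\{\boldsymbol{x}\in\mathbb{R}^{\mathcal{M}}:\prod_{i=1}^{\mathcal{M}}|x_i|<\varepsilon,\ |x_i|\le T\ (i=1,\dots,\mathcal{M})\}$, $H^i:=H\cap\{x_i=0\}$, and $Z^i:=H^i\times\prod_{j=1}^{\mathcal{N}}[-Q_j,Q_j]$. *)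

From HB Require Import structures.
From mathcomp Require Import all_boot all_order all_algebra.
From mathcomp Require Import reals.
Set Implicit Arguments. Unset Strict Implicit. Unset Printing Implicit Defensive.
Import Order.TTheory GRing.Theory Num.Theory.
Local Open Scope ring_scope.

Definition row_Q_indep1 (R : realType) (M N : nat) (L : 'M[R]_(M, N)) (i : 'I_M) : Prop :=
  forall (a : 'I_N -> rat) (b : rat),
    \sum_(j < N) ratr (a j) * L i j + ratr b = 0 ->
    (forall j, a j = 0) /\ b = 0.

Definition Lambda (R : realType) (M N : nat) (L : 'M[R]_(M, N)) : 'rV[R]_(M + N) -> Prop :=
  fun v => exists (p : 'I_M -> int) (q : 'I_N -> int),
      v = row_mx (\row_(k < M) (\sum_(j < N) L k j * (q j)%:~R + (p k)%:~R))
                 (\row_(j < N) (q j)%:~R).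

Definition Hset (R : realType) (M : nat) (eps T : R) (x : 'rV[R]_M) : bool :=
  (\prod_(k < M) `|x ord0 k| < eps) && [forall k, `|x ord0 k| <= T].

Definition Hiset (R : realType) (M : nat) (eps T : R) (i : 'I_M) (x : 'rV[R]_M) : bool :=
  Hset eps T x && (x ord0 i == 0).

Definition Zset (R : realType) (M N : nat) (eps T : R) (Q : 'I_N -> R) (i : 'I_M)
    (v : 'rV[R]_(M + N)) : bool :=
  Hiset eps T i (lsubmx v) && [forall j, `|rsubmx v ord0 j| <= Q j].

From HB Require Import structures.
From mathcomp Require Import all_boot all_order all_algebra.
From mathcomp Require Import reals.
From mathcomp Require Import zify lra.
Set Implicit Arguments. Unset Strict Implicit. Unset Printing Implicit Defensive.
Import Order.TTheory GRing.Theory Num.Theory.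
Local Open Scope ring_scope.

(* Since 1, L_i1, ..., L_iN are independent over Q, a lattice point of Λ_L with
   vanishing i-th coordinate L_i q + p_i = 0 must have q = 0.  Hence Λ_L ∩ Z^i
   consists of integer points (p, 0) with |p_k| <= T, and there are at most
   (2⌊T⌋ + 1)^M <= 2^M (1 + T)^M of them. *)

Lemma row_Q_indep1_int (R : realType) M N (L : 'M[R]_(M, N)) (i : 'I_M)
    (q : 'I_N -> int) (p : int) :
  row_Q_indep1 L i -> \sum_(j < N) L i j * (q j)%:~R + p%:~R = 0 ->
  forall j, q j = 0.
Proof.
move=> indep rel j; have [|q0 _] := indep (fun j => (q j)%:Q) p%:Q.
  rewrite -[RHS]rel ratr_int; congr (_ + _).
  by apply: eq_bigr => k _; rewrite ratr_int mulrC.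
by apply/eqP; rewrite -(intr_eq0 rat) q0.
Qed.

Lemma Lambda_coord_eq0 (R : realType) M N (L : 'M[R]_(M, N)) (i : 'I_M)
    (v : 'rV[R]_(M + N)) :
  row_Q_indep1 L i -> Lambda L v -> lsubmx v ord0 i = 0 ->
  exists p : {ffun 'I_M -> int}, v = row_mx (\row_k (p k)%:~R) 0.
Proof.
move=> indep [p [q ->]]; rewrite row_mxKl mxE => /(row_Q_indep1_int indep) q0.
exists [ffun k => p k]; congr row_mx; apply/rowP => k; rewrite !mxE ?q0 //.
by rewrite ffunE big1 ?add0r // => j _; rewrite q0 mulr0.
Qed.

Lemma Lambda_Zset_int_point (R : realType) M N (L : 'M[R]_(M, N))
    (eps T : R) (Q : 'I_N -> R) (i : 'I_M) (v : 'rV[R]_(M + N)) :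
  row_Q_indep1 L i -> Lambda L v -> Zset eps T Q i v ->
  exists2 p : {ffun 'I_M -> int},
    forall k, `|p k| <= Num.floor T & v = row_mx (\row_k (p k)%:~R) 0.
Proof.
move=> indep Lv /andP[/andP[/andP[_ /forallP le_T] /eqP vi0] _].
have [p v_eq] := Lambda_coord_eq0 indep Lv vi0.
exists p => // k; have := le_T k.
by rewrite v_eq row_mxKl mxE -intr_norm floor_ge_int.
Qed.

Lemma size_uniq_int_box (T : eqType) M (K : nat)
    (e : {ffun 'I_M -> int} -> T) (s : seq T) :
  uniq s ->
  (forall x, x \in s ->
     exists2 p : {ffun 'I_M -> int}, forall k, `|p k| <= K%:Z & x = e p) ->
  (size s <= K.*2.+1 ^ M)%N.
Proof.
move=> s_uniq s_box.
pose box := [seq e [ffun k => (f k)%:Z - K%:Z] | f : {ffun 'I_M -> 'I_K.*2.+1}].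
have -> : (K.*2.+1 ^ M = size box)%N by rewrite size_image card_ffun !card_ord.
apply: uniq_leq_size => // x /s_box [p p_le ->].
have shift_lt k : (absz (p k + K%:Z)%R < K.*2.+1)%N.
  by move: (p k) (p_le k) => a; lia.
apply/imageP; exists [ffun k => inord (absz (p k + K%:Z)%R)] => //.
congr e; apply/ffunP => k; rewrite !ffunE inordK //.
by move: (p k) (p_le k) => a; lia.
Qed.

Lemma natr_box_size_le (R : realFieldType) (M K : nat) (T : R) :
  K%:R <= T -> ((K.*2.+1 ^ M)%:R : R) <= (2 ^ M)%:R * (1 + T) ^+ M.
Proof.
move=> le_KT; rewrite !natrX -exprMn; apply: lerXn2r; rewrite ?nnegrE //.
  by rewrite mulr_ge0 // addr_ge0 // (le_trans _ le_KT).
by rewrite -addn1 -muln2 natrD natrM; lra.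
Qed.

Theorem lemma2p2 :
  forall M : nat, exists C : nat,
  forall (R : realType) (N : nat) (L : 'M[R]_(M, N)),
    (forall i : 'I_M, row_Q_indep1 L i) ->
  forall (eps T : R), 0 < eps -> 0 < T ->
  forall Q : 'I_N -> R, (forall j, 1 <= Q j) ->
  forall i : 'I_M,
  forall s : seq 'rV[R]_(M + N), uniq s ->
    (forall v, v \in s -> Lambda L v /\ Zset eps T Q i v) ->
    (size s)%:R <= C%:R * (1 + T) ^+ M.
Proof.
move=> M; exists (2 ^ M)%N => R N L indep eps T _ T_gt0 Q _ i s s_uniq s_pts.
set K := absz (Num.floor T).
have K_floor : K%:Z = Num.floor T by rewrite gez0_abs // floor_ge0 ltW.
have le_KT : K%:R <= T by rewrite pmulrn K_floor floor_le.
apply: le_trans (natr_box_size_le M le_KT).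
rewrite ler_nat.
apply: (size_uniq_int_box (e := fun p => row_mx (\row_k (p k)%:~R) 0)) => //.
move=> v /s_pts [Lv Zv]; have [p p_le ->] := Lambda_Zset_int_point (indep i) Lv Zv.
by exists p => // k; rewrite K_floor.
Qed.
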